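(* Let $\mathbf{Y}|\mathbf{X}=\mathbf{x}\sim\mathcal{N}(\mathbf{x},\sigma^2\mathbf{I}_n)$ with $\sigma>0$, with transition density $f_{\mathbf{Y}|\mathbf{X}}$. Consider the maximum likelihood estimator of $\vec{\mathbf{X}}$ from $\vec{\mathbf{Y}}=\vec{\mathbf{y}}$, $$\hat{\boldsymbol{\ell}}_{\mathrm{MLE}}(\vec{\mathbf{y}})\in\arg\max_{\mathbf{t}\in\vec{\mathbb{R}}_n}\sum_{\pi\in\mathcal{P}}f_{\mathbf{Y}|\mathbf{X}}(\mathbf{P}_\pi\vec{\mathbf{y}}\,|\,\mathbf{t}).$$ Then the MLE is given by $$\hat{\boldsymbol{\ell}}_{\mathrm{MLE}}(\vec{\mathbf{y}})\in\left\{\mathbf{t}\in\vec{\mathbb{R}}_n:\ \sum_{\pi\in\mathcal{P}}\mathbf{P}_\pi\vec{\mathbf{y}}\,e^{\frac{(\mathbf{P}_\pi\vec{\mathbf{y}})^T\mathbf{t}}{\sigma^2}}=\mathbf{t}\sum_{\pi\in\mathcal{P}}e^{\frac{(\mathbf{P}_\pi\vec{\mathbf{y}})^T\mathbf{t}}{\sigma^2}}\right\},$$ and if this set is empty one sets $\hat{\boldsymbol{\ell}}_{\mathrm{MLE}}(\vec{\mathbf{y}})=\vec{\mathbf{y}}$.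
   Context: For $\mathbf{v}\in\mathbb{R}^n$, $\vec{\mathbf{v}}$ is $\mathbf{v}$ sorted in ascending order. $\vec{\mathbb{R}}_n$ is the set of vectors in $\mathbb{R}^n$ whose entries are in ascending order. $\mathcal{P}$ is the set of permutations of $\{1,\dots,n\}$ and $\mathbf{P}_\pi$ the permutation matrix of $\pi$. *)

From HB Require Import structures.
From mathcomp Require Import all_boot all_order all_algebra all_fingroup.
From mathcomp Require Import all_classical all_reals all_analysis.
Set Implicit Arguments. Unset Strict Implicit. Unset Printing Implicit Defensive.
Import Order.TTheory GRing.Theory Num.Theory.
Local Open Scope ring_scope.

Definition ascending (R : realType) (n : nat) (v : 'cV[R]_n) : Prop :=
  forall i j : 'I_n, (i <= j)%N -> v i 0 <= v j 0.

Definition gauss_density (R : realType) (n : nat) (sigma : R)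
    (y x : 'cV[R]_n) : R :=
  ((Num.sqrt (2 * pi * sigma ^+ 2)) ^+ n)^-1 *
  expR (- (\sum_(i < n) (y i 0 - x i 0) ^+ 2) / (2 * sigma ^+ 2)).

Definition perm_likelihood (R : realType) (n : nat) (sigma : R)
    (y t : 'cV[R]_n) : R :=
  \sum_(s : 'S_n) gauss_density sigma (perm_mx s *m y) t.

Definition is_MLE (R : realType) (n : nat) (sigma : R) (y t : 'cV[R]_n) : Prop :=
  ascending t /\
  forall u : 'cV[R]_n, ascending u -> perm_likelihood sigma y u <= perm_likelihood sigma y t.

Definition ip (R : realType) (n : nat) (a b : 'cV[R]_n) : R := (a^T *m b) 0 0.

Definition MLE_fixed_point_set (R : realType) (n : nat) (sigma : R) (y t : 'cV[R]_n) : Prop :=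
  ascending t /\
  \sum_(s : 'S_n) expR (ip (perm_mx s *m y) t / sigma ^+ 2) *: (perm_mx s *m y)
  = (\sum_(s : 'S_n) expR (ip (perm_mx s *m y) t / sigma ^+ 2)) *: t.

(** The likelihood is invariant under permuting its argument (the Gaussian
   density only sees the distance, and the sum over permutations absorbs the
   reindexing), and every vector can be sorted by a permutation; so an MLE over
   the ascending cone is a global maximiser.  Perturbing it to [t + h e_i], the
   bound [exp x >= 1 + x] turns maximality into [2 h G <= h^2 S] for all [h],
   where [G] is the [i]-th partial derivative of the likelihood (up to a
   positive factor) and [S] is the likelihood; hence [G = 0].  Since every
   [P_pi y] has the same norm, the Gaussian weights are
   [e^{(P_pi y)^T t / sigma^2}] times a positive constant independent of [pi],
   which gives the fixed-point equation. *)

From HB Require Import structures.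
From mathcomp Require Import all_boot all_order all_algebra all_fingroup.
From mathcomp Require Import all_classical all_reals all_analysis.
From mathcomp Require Import ring lra.
Import Order.TTheory GRing.Theory Num.Theory.
Local Open Scope ring_scope.

Lemma eq0_of_le_quadratic (R : realFieldType) (G S : R) :
  (forall h, 2 * h * G <= h ^+ 2 * S) -> G = 0.
Proof.
move=> le_lin_quad.
have [a a_gt0 le_S_a] : exists2 a : R, 0 < a & S <= a - 1.
  by exists (`|S| + 1); rewrite ?ltr_wpDl // addrK real_ler_norm ?num_real.
have [h G_ha] : exists h, G = h * a by exists (G / a); rewrite divfK ?gt_eqF.
have : h ^+ 2 * (a + 1) <= 0.
  have := le_lin_quad h; have := ler_wpM2l (sqr_ge0 h) le_S_a; rewrite G_ha; nra.
rewrite pmulr_lle0 ?addr_gt0 // => h2_le0.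
suff /eqP h0 : h == 0 by rewrite G_ha h0 mul0r.
by rewrite -sqrf_eq0 eq_le h2_le0 sqr_ge0.
Qed.

Lemma sum_mul_le0_of_sum_expR_le (R : realType) (I : finType) (E x : I -> R) :
  (forall s, 0 <= E s) -> \sum_s E s * expR (x s) <= \sum_s E s ->
  \sum_s E s * x s <= 0.
Proof.
move=> E_ge0 le_sum; rewrite -(gerDl (\sum_s E s)); apply: le_trans le_sum.
rewrite -big_split /=; apply: ler_sum => s _.
by rewrite -{1}[E s]mulr1 -mulrDr ler_wpM2l ?expR_ge1Dx.
Qed.

Section GaussianPermLikelihood.
Context {R : realType} {n : nat}.
Implicit Types (sigma h : R) (a b c u y t : 'cV[R]_n) (s : 'S_n).

Lemma perm_mx_mulE s u i : (perm_mx s *m u) i 0 = u (s i) 0.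
Proof. by rewrite -row_permE mxE. Qed.

Lemma ipE a b : ip a b = \sum_k a k 0 * b k 0.
Proof. by rewrite /ip mxE; apply: eq_bigr => k _; rewrite mxE. Qed.

Lemma ip_perm s a b : ip (perm_mx s *m a) (perm_mx s *m b) = ip a b.
Proof.
rewrite !ipE [RHS](reindex_inj (@perm_inj _ s)).
by apply: eq_bigr => k _; rewrite !perm_mx_mulE.
Qed.

Lemma ip_delta a i h : ip a (h *: delta_mx i 0) = h * a i 0.
Proof.
rewrite ipE (bigD1 i) //= big1 => [|k /negbTE neq_ki]; rewrite !mxE ?eqxx ?neq_ki /=.
  by rewrite addr0 mulr1 mulrC.
by rewrite mulr0 mulr0.
Qed.

Lemma sum_sqr_subE a b : \sum_i (a i 0 - b i 0) ^+ 2 = ip (a - b) (a - b).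
Proof. by rewrite ipE; apply: eq_bigr => i _; rewrite !mxE expr2. Qed.

Lemma ip_subDr_sqr a b c :
  ip (a - (b + c)) (a - (b + c)) = ip (a - b) (a - b) - 2 * ip (a - b) c + ip c c.
Proof.
rewrite !ipE mulr_sumr -sumrB -big_split /=; apply: eq_bigr => k _; rewrite !mxE.
by move: (a k 0) (b k 0) (c k 0) => x1 x2 x3; ring.
Qed.

Lemma gauss_density_ge0 sigma a b : 0 <= gauss_density sigma a b.
Proof. by rewrite mulr_ge0 ?invr_ge0 ?exprn_ge0 ?sqrtr_ge0 ?expR_ge0. Qed.

Lemma gauss_density_gt0 sigma a b : sigma != 0 -> 0 < gauss_density sigma a b.
Proof.
move=> sigma_neq0; apply: mulr_gt0; last exact: expR_gt0.
have sigma2_gt0 : 0 < sigma ^+ 2 by rewrite exprn_even_gt0 // sigma_neq0 orbT.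
by rewrite invr_gt0 exprn_gt0 // sqrtr_gt0 mulr_gt0 // mulr_gt0 // pi_gt0.
Qed.

Lemma gauss_density_perm sigma s a b :
  gauss_density sigma (perm_mx s *m a) (perm_mx s *m b) = gauss_density sigma a b.
Proof. by rewrite /gauss_density !sum_sqr_subE -mulmxBr ip_perm. Qed.

Lemma gauss_densityD sigma a b c :
  gauss_density sigma a (b + c) =
  gauss_density sigma a b * expR ((2 * ip (a - b) c - ip c c) / (2 * sigma ^+ 2)).
Proof.
rewrite /gauss_density !sum_sqr_subE ip_subDr_sqr -[RHS]mulrA -expRD.
by congr (_ * expR _); rewrite -mulrDl; congr (_ / _); ring.
Qed.

Lemma gauss_density_ip sigma a b : sigma != 0 ->
  gauss_density sigma a b =
  gauss_density sigma a 0 * expR (- ip b b / (2 * sigma ^+ 2)) * expR (ip a b / sigma ^+ 2).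
Proof.
move=> sigma_neq0; have := gauss_densityD sigma a 0 b; rewrite add0r subr0 => ->.
by rewrite -mulrA -expRD; congr (_ * expR _); field.
Qed.

Lemma perm_likelihood_perm sigma y s u :
  perm_likelihood sigma y (perm_mx s *m u) = perm_likelihood sigma y u.
Proof.
rewrite /perm_likelihood (reindex_inj (mulgI s)); apply: eq_bigr => s' _.
by rewrite perm_mxM -mulmxA gauss_density_perm.
Qed.

Lemma exists_perm_ascending u : exists s, ascending (perm_mx s *m u).
Proof.
pose leu := fun i j : 'I_n => u i 0 <= u j 0.
pose order := sort leu (enum 'I_n).
have size_order : size order = n by rewrite size_sort size_enum_ord.
have order_uniq : uniq order by rewrite sort_uniq enum_uniq.
have order_sorted : sorted leu order by apply: sort_sorted => i j; exact: le_total.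
have nth_order_inj : injective (fun i : 'I_n => nth i order i).
  move=> i j /=; rewrite (set_nth_default j) ?size_order // => /eqP.
  by rewrite nth_uniq ?size_order // => /eqP; exact: val_inj.
exists (perm nth_order_inj) => i j le_ij.
rewrite !perm_mx_mulE !permE /= (set_nth_default i j) ?size_order //.
apply: (sorted_leq_nth (leT := leu)) => //; rewrite ?inE ?size_order //.
- by move=> ? ? ?; exact: le_trans.
- by move=> ?; exact: lexx.
Qed.

Lemma is_MLE_max {sigma y t} :
  is_MLE sigma y t -> forall u, perm_likelihood sigma y u <= perm_likelihood sigma y t.
Proof.
move=> [_ t_max] u; have [s su_asc] := exists_perm_ascending u.
by rewrite -(perm_likelihood_perm sigma y s u); exact: t_max.
Qed.

Lemma perm_likelihood_max_grad_eq0 sigma y t i : sigma != 0 ->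
  (forall u, perm_likelihood sigma y u <= perm_likelihood sigma y t) ->
  \sum_s gauss_density sigma (perm_mx s *m y) t * ((perm_mx s *m y) i 0 - t i 0) = 0.
Proof.
move=> sigma_neq0 t_max.
apply: (@eq0_of_le_quadratic _ _ (\sum_s gauss_density sigma (perm_mx s *m y) t)) => h.
have := t_max (t + h *: delta_mx i 0); rewrite /perm_likelihood.
under eq_bigr do rewrite gauss_densityD.
move/sum_mul_le0_of_sum_expR_le => /(_ (fun s => gauss_density_ge0 _ _ _)).
set G := \sum_s _ * (_ - _); set S := \sum_s gauss_density _ _ _.
rewrite (_ : \sum_s _ * (_ / _) = (2 * h * G - h ^+ 2 * S) / (2 * sigma ^+ 2)).
  by rewrite pmulr_lle0 ?subr_le0 // invr_gt0 pmulr_rgt0 // exprn_even_gt0.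
rewrite !mulr_sumr -sumrB mulr_suml; apply: eq_bigr => s _.
by rewrite !ip_delta !mxE eqxx /=; ring.
Qed.

Lemma perm_likelihood_max_weights sigma y t i : sigma != 0 ->
  (forall u, perm_likelihood sigma y u <= perm_likelihood sigma y t) ->
  \sum_s expR (ip (perm_mx s *m y) t / sigma ^+ 2) * ((perm_mx s *m y) i 0 - t i 0) = 0.
Proof.
move=> sigma_neq0 /(perm_likelihood_max_grad_eq0 sigma y t i sigma_neq0).
set C := gauss_density sigma y 0 * expR (- ip t t / (2 * sigma ^+ 2)).
have factor s : gauss_density sigma (perm_mx s *m y) t =
    C * expR (ip (perm_mx s *m y) t / sigma ^+ 2).
  have perm_y0 : gauss_density sigma (perm_mx s *m y) 0 = gauss_density sigma y 0.
    by rewrite -(gauss_density_perm sigma s y 0) mulmx0.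
  by rewrite gauss_density_ip // perm_y0.
under eq_bigr do rewrite factor -mulrA; rewrite -mulr_sumr => /eqP.
have C_gt0 : 0 < C by rewrite mulr_gt0 ?expR_gt0 // gauss_density_gt0.
by rewrite mulf_eq0 gt_eqF // => /eqP.
Qed.

End GaussianPermLikelihood.

Theorem lemma2 (R : realType) (n : nat) (sigma : R) (y t : 'cV[R]_n) :
  0 < sigma -> ascending y -> is_MLE sigma y t -> MLE_fixed_point_set sigma y t.
Proof.
move=> sigma_gt0 _ MLE_t; split; first by case: MLE_t.
apply/colP => i; rewrite summxE !mxE.
under eq_bigr do rewrite mxE.
apply/eqP; rewrite -subr_eq0 mulr_suml -sumrB; apply/eqP.
rewrite -[RHS](perm_likelihood_max_weights sigma y t i (lt0r_neq0 sigma_gt0) (is_MLE_max MLE_t)).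
by apply: eq_bigr => s _; rewrite mulrBr.
Qed.
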